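(* Let $\kappa$ be an infinite cardinal. There exist a non-abelian group $G$ with $|G|=2^\kappa$ and a colouring $c:G\to\kappa$ such that for all non-identity elements $x,y\in G$, if $c(x)=c(y)$ then $c(x)\neq c(xy)$. *)

From Stdlib Require Import List.
From mathcomp Require Import ssreflect ssrfun ssrbool.

Definition is_group (G : Type) (mul : G -> G -> G) (e : G) (inv : G -> G) : Prop :=
  (forall x y z, mul x (mul y z) = mul (mul x y) z) /\
  (forall x, mul e x = x /\ mul x e = x) /\
  (forall x, mul (inv x) x = e /\ mul x (inv x) = e).

Definition non_abelian (G : Type) (mul : G -> G -> G) : Prop :=
  exists x y, mul x y <> mul y x.

Definition infinite_type (K : Type) : Prop :=
  ~ exists s : list K, forall x : K, In x s.

Definition card_eq_pow2 (A K : Type) : Prop :=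
  exists f : A -> (K -> bool), bijective f.

From Stdlib Require Import List.
From mathcomp Require Import ssreflect ssrfun ssrbool eqtype ssrnat choice.
From Stdlib Require Import Classical ClassicalEpsilon FunctionalExtensionality.

(* The group is the Heisenberg-type central extension of the Boolean group
   [K -> bool] in which the coordinate [c] picks up the cocycle [f a && g b].
   An element with support outside [{a, b, c}] is coloured by a point [k] of
   its support; two such elements of the same colour both contain [k], so
   their product misses [k] and cannot have the colour [k].  The remaining
   elements are coloured by their three coordinates at [a, b, c] with eight
   extra colours; two of them share a colour only if they are equal, and the
   square of [x] vanishes at [a] and [b] and equals [x a && x b] at [c], so it
   has the colour of [x] only if [x] is the identity.  Since [K] is infinite,
   [K] absorbs the eight extra colours (Hilbert's hotel). *)

Section InfiniteType.

Context {K : Type}.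

Fixpoint fresh_prefix (fresh : list K -> K) (n : nat) : list K :=
  if n is n'.+1 then fresh (fresh_prefix fresh n') :: fresh_prefix fresh n'
  else nil.

Lemma in_fresh_prefix (fresh : list K -> K) m n :
  m < n -> In (fresh (fresh_prefix fresh m)) (fresh_prefix fresh n).
Proof.
elim: n => // n IHn; rewrite ltnS leq_eqVlt => /orP[/eqP-> | lt_mn] /=.
- by left.
- by right; apply: IHn.
Qed.

Lemma infinite_nat_inj : infinite_type K -> exists j : nat -> K, injective j.
Proof.
move=> infK.
have [fresh freshP] : exists fresh : list K -> K, forall l, ~ In (fresh l) l.
  apply: (choice (fun l x => ~ In x l)) => l.
  apply: NNPP => no_fresh; apply: infK; exists l => x.
  by apply: NNPP => not_in; apply: no_fresh; exists x.
exists (fun n => fresh (fresh_prefix fresh n)).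
suff lt_neq m n : m < n -> fresh (fresh_prefix fresh m) <> fresh (fresh_prefix fresh n).
  move=> m n eq_mn; case: (ltngtP m n) => // [lt_mn | lt_nm].
  - by case: (lt_neq m n lt_mn).
  - by case: (lt_neq n m lt_nm).
move=> lt_mn eq_mn; apply: (freshP (fresh_prefix fresh n)).
by rewrite -eq_mn; apply: in_fresh_prefix.
Qed.

Section Hotel.

Variables (T : countType) (j : nat -> K).
Hypothesis j_inj : injective j.

Definition hotel (s : T + K) : K :=
  match s with
  | inl t => j (pickle t).*2
  | inr k =>
    match excluded_middle_informative (exists m, j m = k) with
    | left in_range => j (proj1_sig (constructive_indefinite_description _ in_range)).*2.+1
    | right _ => k
    end
  end.

Lemma hotel_inr k :
  (exists m, j m = k /\ hotel (inr k) = j m.*2.+1) \/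
  ((forall m, j m <> k) /\ hotel (inr k) = k).
Proof.
rewrite /=; case: excluded_middle_informative => [in_range | not_in_range].
- left; case: constructive_indefinite_description => m jm /=; by exists m.
- by right; split=> // m jm; apply: not_in_range; exists m.
Qed.

Lemma hotel_inj : injective hotel.
Proof.
have double_neq_odd m n : m.*2 <> n.*2.+1 by move=> /(congr1 odd); rewrite oddS !odd_double.
case=> [t | k] [t' | k'].
- by move=> /= /j_inj/double_inj/(pcan_inj pickleK)->.
- case: (hotel_inr k') => [[m' [_ ->]] | [not_in_range' ->]] /=.
  + by move=> /j_inj/double_neq_odd.
  + by move=> jt; case: (not_in_range' (pickle t).*2).
- case: (hotel_inr k) => [[m [_ ->]] | [not_in_range ->]] /=.
  + by move=> /j_inj/esym/double_neq_odd.
  + by move=> jt; case: (not_in_range (pickle t').*2).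
- case: (hotel_inr k) => [[m [<- ->]] | [not_in_range ->]];
  case: (hotel_inr k') => [[m' [<- ->]] | [not_in_range' ->]] //.
  + by move=> /j_inj[/double_inj->].
  + by move=> jk'; case: (not_in_range' m.*2.+1).
  + by move=> jk; case: (not_in_range m'.*2.+1).
  + by move=> ->.
Qed.

End Hotel.

Lemma infinite_sum_countable_inj (T : countType) :
  infinite_type K -> exists h : T + K -> K, injective h.
Proof.
by move=> /infinite_nat_inj[j j_inj]; exists (hotel T j); apply: hotel_inj.
Qed.

End InfiniteType.

Definition mono_product_free {G C : Type} (mul : G -> G -> G) (e : G) (col : G -> C) :=
  forall x y, x <> e -> y <> e -> col x = col y -> col x <> col (mul x y).

Lemma mono_product_free_comp {G C D : Type} (mul : G -> G -> G) (e : G)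
    (col : G -> C) (h : C -> D) :
  injective h -> mono_product_free mul e col -> mono_product_free mul e (h \o col).
Proof. by move=> h_inj colP x y x1 y1 /= /h_inj/(colP x y x1 y1) neq /h_inj. Qed.

Section HeisenbergExtension.

Context {K : Type} (a b c : K).

Definition indicator (p k : K) : bool :=
  if excluded_middle_informative (k = p) then true else false.

Lemma indicator_id p : indicator p p = true.
Proof. by rewrite /indicator; case: excluded_middle_informative. Qed.

Lemma indicator_neq {p k} : k <> p -> indicator p k = false.
Proof. by rewrite /indicator; case: excluded_middle_informative. Qed.

Definition heis_one : K -> bool := fun _ => false.

Definition heis_mul (f g : K -> bool) : K -> bool :=
  fun k => f k (+) g k (+) indicator c k && (f a && g b).

Definition heis_inv (f : K -> bool) : K -> bool :=
  fun k => f k (+) indicator c k && (f a && f b).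

Lemma heis_mul_neq f g k : k <> c -> heis_mul f g k = f k (+) g k.
Proof. by move=> kc; rewrite /heis_mul (indicator_neq kc) /= addbF. Qed.

Lemma heis_mulxx f k : heis_mul f f k = indicator c k && (f a && f b).
Proof. by rewrite /heis_mul addbb. Qed.

Hypotheses (a_neq_c : a <> c) (b_neq_c : b <> c).

Lemma heis_group : is_group (K -> bool) heis_mul heis_one heis_inv.
Proof.
split; [move=> f g h | split=> f; split]; apply: functional_extensionality => k.
- rewrite /heis_mul /= (indicator_neq a_neq_c) (indicator_neq b_neq_c).
  by case: (indicator c k); case: (f k); case: (g k); case: (h k);
    case: (f a); case: (g a); case: (g b); case: (h b).
- by rewrite /heis_mul /heis_one andbF addbF.
- by rewrite /heis_mul /heis_one !andbF !addbF.
- rewrite /heis_mul /heis_inv /heis_one /= (indicator_neq a_neq_c).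
  by case: (indicator c k); case: (f k); case: (f a); case: (f b).
- rewrite /heis_mul /heis_inv /heis_one /= (indicator_neq b_neq_c).
  by case: (indicator c k); case: (f k); case: (f a); case: (f b).
Qed.

Lemma heis_non_abelian : a <> b -> non_abelian (K -> bool) heis_mul.
Proof.
move=> a_neq_b; exists (indicator a), (indicator b).
move=> /(congr1 (fun f => f c)); rewrite /heis_mul !indicator_id (indicator_neq a_neq_b) /=.
by case: (indicator a c); case: (indicator b c).
Qed.

Definition outside (k : K) : Prop := [/\ k <> a, k <> b & k <> c].

Definition heis_col (f : K -> bool) : (bool * bool * bool) + K :=
  match excluded_middle_informative (exists k, outside k /\ f k) with
  | left big => inr (proj1_sig (constructive_indefinite_description _ big))
  | right _ => inl (f a, f b, f c)
  end.

Lemma heis_col_inr {f k} : heis_col f = inr k -> outside k /\ f k.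
Proof.
rewrite /heis_col; case: excluded_middle_informative => // big.
by case: constructive_indefinite_description => k' k'P [<-].
Qed.

Lemma heis_col_inl {f t} :
  heis_col f = inl t -> (forall k, outside k -> f k = false) /\ t = (f a, f b, f c).
Proof.
rewrite /heis_col; case: excluded_middle_informative => // small [<-].
by split=> // k out_k; apply/negP => fk; apply: small; exists k.
Qed.

Lemma eq_outside_zero f g :
  (forall k, outside k -> f k = false) -> (forall k, outside k -> g k = false) ->
  (f a, f b, f c) = (g a, g b, g c) -> f = g.
Proof.
move=> f0 g0 [fga fgb fgc]; apply: functional_extensionality => k.
case: (excluded_middle_informative (k = a)) => [-> | ka] //.
case: (excluded_middle_informative (k = b)) => [-> | kb] //.
case: (excluded_middle_informative (k = c)) => [-> | kc] //.
by rewrite f0 ?g0.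
Qed.

Lemma heis_col_mono_product_free : mono_product_free heis_mul heis_one heis_col.
Proof.
move=> x y x1 y1; case col_x: (heis_col x) => [t | k] col_y col_xy.
- have [x0 xt] := heis_col_inl col_x.
  have [y0 yt] := heis_col_inl (esym col_y).
  have yx : y = x by apply: eq_outside_zero => //; rewrite -xt -yt.
  have [_] := heis_col_inl (esym col_xy).
  rewrite yx xt !heis_mulxx indicator_id (indicator_neq a_neq_c) (indicator_neq b_neq_c) /=.
  case=> xa xb; rewrite xa xb => xc.
  by apply: x1; apply: eq_outside_zero => //; rewrite xa xb xc.
- have [out_k xk] := heis_col_inr col_x.
  have [_ yk] := heis_col_inr (esym col_y).
  have [_] := heis_col_inr (esym col_xy).
  by case: out_k => _ _ kc; rewrite heis_mul_neq // xk yk.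
Qed.

End HeisenbergExtension.

Theorem mainTheorem4 (K : Type) (hK : infinite_type K) :
  exists (G : Type) (mul : G -> G -> G) (e : G) (inv : G -> G),
    is_group G mul e inv /\ non_abelian G mul /\ card_eq_pow2 G K /\
    exists c : G -> K,
      forall x y : G, x <> e -> y <> e -> c x = c y -> c x <> c (mul x y).
Proof.
have [j j_inj] := infinite_nat_inj hK.
have j_neq m n : m <> n -> j m <> j n by move=> neq_mn /j_inj.
have [h h_inj] := infinite_sum_countable_inj (bool * bool * bool)%type hK.
exists (K -> bool), (heis_mul (j 0) (j 1) (j 2)), heis_one, (heis_inv (j 0) (j 1) (j 2)).
split; [|split; [|split]].
- by apply: heis_group; apply: j_neq.
- by apply: heis_non_abelian; apply: j_neq.
- by exists id; exists id.
- exists (h \o heis_col (j 0) (j 1) (j 2)).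
  apply: mono_product_free_comp h_inj _.
  by apply: heis_col_mono_product_free; apply: j_neq.
Qed.
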